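(* Let $d\ge 3$ and let $j$ be an integer with $0\le j\le d-1$. (a) If $d$ is odd and $d-j$ is even, then $\operatorname{triv}(d,j)=\operatorname{sign}(d,j)=\left\lfloor \frac{3d-2j-3}{6}\right\rfloor-\frac{d-j-2}{2}$. (b) If $d$ is odd and $d-j$ is odd, then $\operatorname{triv}(d,j)=\left\lfloor \frac{3d-2j-3}{6}\right\rfloor-\frac{d-j-3}{2}$ and $\operatorname{sign}(d,j)=\left\lfloor \frac{3d-2j-3}{6}\right\rfloor-\frac{d-j-1}{2}$. (c) If $d$ is even and $d-j$ is even, then $\operatorname{triv}(d,j)=\left\lfloor \frac{3d-2j}{6}\right\rfloor-\frac{d-j-2}{2}$ and $\operatorname{sign}(d,j)=\left\lfloor \frac{3d-2j}{6}\right\rfloor-\frac{d-j}{2}$. (d) If $d$ is even and $d-j$ is odd, then $\operatorname{triv}(d,j)=\operatorname{sign}(d,j)=\left\lfloor \frac{3d-2j}{6}\right\rfloor-\frac{d-j-1}{2}$.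
   Context: $\Bbbk$ is an algebraically closed field of characteristic $0$. For an integer $d\ge 1$, $A(d)=\Bbbk[x_1,x_2,x_3]/(x_1^d,x_2^d,x_3^d)=\bigoplus_j A(d)_j$ with its standard grading. $S_3$ acts on $A(d)$ by permuting variables. The linear map $E:A(d)_{j+1}\to A(d)_j$ is defined on the monomial basis by $E(x_1^{a_1}x_2^{a_2}x_3^{a_3})=\sum_{k=1}^{3} a_k(d-a_k)\,x_1^{a_1}\cdots x_k^{a_k-1}\cdots x_3^{a_3}$; it commutes with the $S_3$-action. $\operatorname{triv}(d,j)$ and $\operatorname{sign}(d,j)$ denote the multiplicities of the trivial and sign representations of $S_3$ in $\operatorname{Ker}(E)\cap A(d)_j$. *)

From HB Require Import structures.
From mathcomp Require Import all_boot all_order all_algebra all_fingroup.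
Set Implicit Arguments. Unset Strict Implicit. Unset Printing Implicit Defensive.
Import GRing.Theory.
Local Open Scope ring_scope.

(* Monomials x1^a1 x2^a2 x3^a3 of A(d) = k[x1,x2,x3]/(x1^d,x2^d,x3^d):
   exponent vectors a : 'I_3 -> 'I_d (i.e. 0 <= a_k < d). *)
Definition mono (d : nat) := {ffun 'I_3 -> 'I_d}.
Definition mdeg d (a : mono d) : nat := (\sum_(k < 3) (a k : nat))%N.

(* An element of A(d) is a row vector of coefficients, indexed by monomials
   via enum_rank: the coefficient of x^a in v is v 0 (enum_rank a). *)
Notation N d := #|mono d|.
Definition mon d (i : 'I_(N d)) : mono d := enum_val i.

Definition lower_k d (k : 'I_3) (a b : mono d) : bool :=
  ((a k : nat) == (b k).+1) && [forall l, (l != k) ==> (a l == b l)].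

(* Matrix of E (acting on row vectors on the right):
   E(x^a) = sum_k a_k (d - a_k) x^(a - e_k). *)
Definition Emx (F : fieldType) d : 'M[F]_(N d) :=
  \matrix_(i, j) \sum_(k < 3)
     (if lower_k k (mon i) (mon j)
      then ((mon i k : nat) * (d - mon i k))%:R else 0).

(* Permutation action of sigma in S_3: x_k |-> x_(sigma k), so
   x^a |-> x^b with b (sigma k) = a k, i.e. b = a o sigma^-1. *)
Definition Pmx (F : fieldType) d (s : 'S_3) : 'M[F]_(N d) :=
  \matrix_(i, j) (mon j == [ffun l => mon i ((s^-1)%g l)])%:R.

(* Diagonal matrix killing exactly the degree-j part: v *m Dmx j = 0 iff
   v lies in A(d)_j. *)
Definition Dmx (F : fieldType) d (j : nat) : 'M[F]_(N d) :=
  \matrix_(i, i') ((i == i') && (mdeg (mon i) != j))%:R.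

(* The subspace of Ker(E) ∩ A(d)_j on which S_3 acts through the character
   chi (chi = trivial or sign), i.e. the chi-isotypic component. *)
Definition isotypic (F : fieldType) d j (chi : 'S_3 -> F) : 'M[F]_(N d) :=
  (kermx (@Dmx F d j) :&: kermx (@Emx F d)
   :&: \bigcap_(s : 'S_3) kermx (@Pmx F d s - (chi s)%:M))%MS.

(* Multiplicities of the (one-dimensional) trivial and sign representations
   in Ker(E) ∩ A(d)_j = dimensions of the corresponding isotypic parts. *)
Definition triv (F : fieldType) d j : nat := \rank (@isotypic F d j (fun _ => 1)).
Definition sign (F : fieldType) d j : nat :=
  \rank (@isotypic F d j (fun s => (-1) ^+ odd_perm s)).

From HB Require Import structures.
From mathcomp Require Import all_boot all_order all_algebra all_fingroup.
From mathcomp Require Import zify ring.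
Set Implicit Arguments. Unset Strict Implicit. Unset Printing Implicit Defensive.
Import GRing.Theory.
Local Open Scope ring_scope.

(* For a linear character chi of S_3, the matrix
   Q_j = 1/6 * (projection onto A(d)_j) * sum_s chi(s) P_s is an idempotent
   whose image is the chi-isotypic part of A(d)_j; its rank is therefore its
   trace, i.e. 1/6 sum_s chi(s) #{degree j monomials fixed by s}, a lattice
   point count.  The chi-isotypic part of Ker E ∩ A(d)_j is the kernel of E on
   the image of Q_j.  As E commutes with S_3 and maps A(d)_(j+1) onto A(d)_j
   for j + 1 < d (lower the exponent of x_1 with the nonzero coefficient
   a_1 (d - a_1), inducting downwards on the exponent of x_1), that image is
   the image of Q_(j-1).  So the multiplicity in Ker E ∩ A(d)_j is
   rank Q_j - rank Q_(j-1), and the closed forms are arithmetic. *)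

Lemma mulmx_idempotent_factor (F : fieldType) n r (C : 'M[F]_(n, r)) (R : 'M[F]_(r, n))
    (C' : 'M[F]_(r, n)) (R' : 'M[F]_(n, r)) :
  C' *m C = 1%:M -> R *m R' = 1%:M -> (C *m R) *m (C *m R) = C *m R -> R *m C = 1%:M.
Proof.
move=> C'C RR' /(congr1 (fun M => C' *m M *m R')).
by rewrite /= !mulmxA C'C mul1mx -!mulmxA RR' mulmx1 => ->.
Qed.

Lemma mxtrace_idempotent (F : fieldType) n (A : 'M[F]_n) :
  A *m A = A -> \tr A = (\rank A)%:R.
Proof.
move=> AA.
have [C' C'C] := row_fullP (col_base_full A).
have [R' RR'] := row_freeP (row_base_free A).
have RC : row_base A *m col_base A = 1%:M.
  by apply: (mulmx_idempotent_factor C'C RR'); rewrite mulmx_base.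
by rewrite -{1}(mulmx_base A) mxtrace_mulC RC mxtrace1.
Qed.

Definition i0 : 'I_3 := @Ordinal 3 0 isT.
Definition i1 : 'I_3 := @Ordinal 3 1 isT.
Definition i2 : 'I_3 := @Ordinal 3 2 isT.
Definition t01 : 'S_3 := tperm i0 i1.
Definition t02 : 'S_3 := tperm i0 i2.
Definition t12 : 'S_3 := tperm i1 i2.
Definition cyc1 : 'S_3 := (t01 * t12)%g.
Definition cyc2 : 'S_3 := (t12 * t01)%g.

Lemma tpermE (T : finType) (x y z : T) :
  tperm x y z = if z == x then y else if z == y then x else z.
Proof.
by case: tpermP => [->|->|/eqP/negbTE-> /eqP/negbTE->]; rewrite ?eqxx //; case: eqP => [->|].
Qed.

Lemma sum_S3 (R : nmodType) (g : 'S_3 -> R) :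
  \sum_s g s = g 1%g + g t01 + g t02 + g t12 + g cyc1 + g cyc2.
Proof.
pose L := [:: 1%g; t01; t02; t12; cyc1; cyc2].
have uniqL : uniq L.
  apply: (@map_uniq _ _ (fun s : 'S_3 => (nat_of_ord (s i0), nat_of_ord (s i1)))).
  by rewrite /= /cyc1 /cyc2 /t01 /t02 /t12 !permM !tpermE !perm1.
have memL s : s \in L.
  have : [set s in L] = [set: 'S_3].
    apply/eqP; rewrite eqEcard subsetT /= cardsT card_Sn cardsE.
    by rewrite (card_uniqP uniqL).
  by move/setP/(_ s); rewrite inE in_setT.
transitivity (\sum_(s in L) g s); first by apply: eq_bigl => s; rewrite memL.
by rewrite -big_uniq //= !big_cons big_nil addr0 !addrA.
Qed.

Section LatticePoints.
Local Open Scope nat_scope.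

Lemma sum_ord_eq d k : \sum_(z < d) ((z : nat) == k) = (k < d).
Proof.
elim: d => [|d IH]; first by rewrite big_ord0.
by rewrite big_ord_recr /= IH ltnS leq_eqVlt; case: (ltngtP k d) => h //=; lia.
Qed.

Lemma sum_ord_le d k : \sum_(y < d) ((y : nat) <= k) = minn k.+1 d.
Proof.
elim: d => [|d IH]; first by rewrite big_ord0 minn0.
by rewrite big_ord_recr /= IH; case: leqP => h; lia.
Qed.

Lemma sum_ord_addn_eq d w j : j < d -> \sum_(z < d) (w + z == j) = (w <= j).
Proof.
move=> hj; case: (leqP w j) => h; last by rewrite big1 // => z _; case: eqP => //; lia.
have hjw : (j - w < d)%N by lia.
transitivity (nat_of_bool (j - w < d)); last by rewrite hjw.
rewrite -(sum_ord_eq d (j - w)); apply: eq_bigr => z _; congr (nat_of_bool _).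
by apply/eqP/eqP; lia.
Qed.

Lemma sum_indicator_mul d (g : 'I_d -> nat) x : \sum_(y < d) ((x == y) * g y) = g x.
Proof.
rewrite (bigD1 x) //= eqxx mul1n big1 ?addn0 // => y hy.
by rewrite eq_sym (negbTE hy).
Qed.

Lemma triangular_sum m : (\sum_(x < m) (m - x)) * 2 = m * m.+1.
Proof.
elim: m => [|m IH]; first by rewrite big_ord0.
rewrite big_ord_recr /= subSnn.
have -> : \sum_(x < m) (m.+1 - x) = \sum_(x < m) (m - x) + m.
  rewrite -[X in _ + X]card_ord -sum1_card -big_split /=; apply: eq_bigr => x _.
  by have := ltn_ord x; lia.
lia.
Qed.

Lemma count_triples d j : j < d ->
  (\sum_(x < d) \sum_(y < d) \sum_(z < d) ((x : nat) + y + z == j)) * 2 = j.+1 * j.+2.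
Proof.
move=> hj.
have -> : \sum_(x < d) \sum_(y < d) \sum_(z < d) ((x : nat) + y + z == j)
          = \sum_(x < d) ((x <= j) * (j - x).+1).
  apply: eq_bigr => x _.
  transitivity (\sum_(y < d) ((x : nat) + y <= j)).
    by apply: eq_bigr => y _; rewrite sum_ord_addn_eq.
  case: (leqP x j) => h; last by rewrite big1 // => y _; apply/eqP; rewrite eqb0 -ltnNge; lia.
  rewrite mul1n -[RHS](_ : minn (j - x).+1 d = (j - x).+1); last by lia.
  by rewrite -sum_ord_le; apply: eq_bigr => y _; congr (nat_of_bool _); apply/idP/idP; lia.
have -> : \sum_(x < d) ((x <= j) * (j - x).+1) = \sum_(x < j.+1) (j.+1 - x).
  rewrite (big_ord_widen d (fun x => j.+1 - x)) // [RHS]big_mkcond /=.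
  by apply: eq_bigr => x _; rewrite ltnS; case: leqP => h; lia.
exact: triangular_sum.
Qed.

Lemma sum_ord_double_le d j : j < d -> \sum_(x < d) ((x : nat) + x <= j) = (j %/ 2).+1.
Proof.
move=> hj; rewrite -[RHS](_ : minn (j %/ 2).+1 d = (j %/ 2).+1); last by lia.
by rewrite -sum_ord_le; apply: eq_bigr => x _; congr (nat_of_bool _); apply/idP/idP; lia.
Qed.

Lemma count_triples_eq01 d j : j < d ->
  \sum_(x < d) \sum_(y < d) \sum_(z < d) (((x : nat) + y + z == j) && (x == y))
  = (j %/ 2).+1.
Proof.
move=> hj; rewrite -(sum_ord_double_le hj); apply: eq_bigr => x _.
rewrite -(sum_ord_addn_eq _ hj).
transitivity (\sum_(y < d) ((x == y) * \sum_(z < d) ((x : nat) + y + z == j))).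
  apply: eq_bigr => y _; rewrite big_distrr /=; apply: eq_bigr => z _.
  by rewrite mulnC mulnb.
exact: (sum_indicator_mul (fun y => \sum_(z < d) ((x : nat) + y + z == j))).
Qed.

Lemma count_triples_eq02 d j : j < d ->
  \sum_(x < d) \sum_(y < d) \sum_(z < d) (((x : nat) + y + z == j) && (x == z))
  = (j %/ 2).+1.
Proof.
move=> hj; rewrite -(sum_ord_double_le hj); apply: eq_bigr => x _.
rewrite -(sum_ord_addn_eq _ hj); apply: eq_bigr => y _.
transitivity (\sum_(z < d) ((x == z) * ((x : nat) + y + z == j))).
  by apply: eq_bigr => z _; rewrite mulnC mulnb.
rewrite (sum_indicator_mul (fun z => ((x : nat) + y + z == j))).
by congr (nat_of_bool _); apply/eqP/eqP; lia.
Qed.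

Lemma count_triples_eq12 d j : j < d ->
  \sum_(x < d) \sum_(y < d) \sum_(z < d) (((x : nat) + y + z == j) && (y == z))
  = (j %/ 2).+1.
Proof.
move=> hj; rewrite -(sum_ord_double_le hj) exchange_big; apply: eq_bigr => y _.
rewrite -(sum_ord_addn_eq _ hj); apply: eq_bigr => x _.
transitivity (\sum_(z < d) ((y == z) * ((x : nat) + y + z == j))).
  by apply: eq_bigr => z _; rewrite mulnC mulnb.
rewrite (sum_indicator_mul (fun z => ((x : nat) + y + z == j))).
by congr (nat_of_bool _); apply/eqP/eqP; lia.
Qed.

Lemma count_triples_diag d j : j < d ->
  \sum_(x < d) \sum_(y < d) \sum_(z < d) [&& (x : nat) + y + z == j, x == y & y == z]
  = (j %% 3 == 0).
Proof.
move=> hj.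
transitivity (\sum_(x < d) ((x : nat) == j %/ 3) * (j %% 3 == 0)).
  apply: eq_bigr => x _.
  transitivity (\sum_(y < d) ((x == y) *
                  \sum_(z < d) ((x == z) * ((x : nat) + x + z == j)))).
    apply: eq_bigr => y _; rewrite big_distrr /=; apply: eq_bigr => z _.
    case: (eqVneq x y) => [<-|hxy] /=; first by rewrite mul1n mulnb andbC.
    by rewrite andbF mul0n.
  rewrite (sum_indicator_mul (fun y => \sum_(z < d) ((x == z) * ((x : nat) + x + z == j)))).
  rewrite (sum_indicator_mul (fun z => ((x : nat) + x + z == j))) mulnb.
  congr (nat_of_bool _).
  by case: eqP => h1; case: eqP => h2; case: eqP => h3 //=; exfalso; lia.
by rewrite -big_distrl /= sum_ord_eq (_ : j %/ 3 < d) ?mul1n //; lia.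
Qed.

Lemma sum3D d (f g : 'I_d -> 'I_d -> 'I_d -> nat) :
  \sum_(x < d) \sum_(y < d) \sum_(z < d) (f x y z + g x y z)
  = \sum_(x < d) \sum_(y < d) \sum_(z < d) f x y z
    + \sum_(x < d) \sum_(y < d) \sum_(z < d) g x y z.
Proof.
rewrite -big_split; apply: eq_bigr => x _; rewrite -big_split; apply: eq_bigr => y _.
by rewrite -big_split.
Qed.

Lemma sum3Ml d c (f : 'I_d -> 'I_d -> 'I_d -> nat) :
  \sum_(x < d) \sum_(y < d) \sum_(z < d) (c * f x y z)
  = c * \sum_(x < d) \sum_(y < d) \sum_(z < d) f x y z.
Proof.
rewrite big_distrr; apply: eq_bigr => x _; rewrite big_distrr; apply: eq_bigr => y _.
by rewrite big_distrr.
Qed.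

End LatticePoints.

Lemma sum3_natr (R : pzSemiRingType) d (f g : 'I_d -> 'I_d -> 'I_d -> nat) (c : R) :
  \sum_(x < d) \sum_(y < d) \sum_(z < d) ((f x y z)%:R + c * (g x y z)%:R)
  = (\sum_(x < d) \sum_(y < d) \sum_(z < d) f x y z)%:R
    + c * (\sum_(x < d) \sum_(y < d) \sum_(z < d) g x y z)%:R.
Proof.
rewrite !natr_sum mulr_sumr -big_split; apply: eq_bigr => x _.
rewrite !natr_sum mulr_sumr -big_split; apply: eq_bigr => y _.
by rewrite !natr_sum mulr_sumr -big_split.
Qed.

Section Monomials.
Variables (F : fieldType) (d : nat).
Local Notation n := (N d).

Definition midx (a : mono d) : 'I_n := enum_rank a.
Lemma monK i : midx (mon i) = i. Proof. exact: enum_valK. Qed.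
Lemma midxK a : mon (midx a) = a. Proof. exact: enum_rankK. Qed.
Lemma eq_mon i a : (mon i == a) = (i == midx a).
Proof. by apply/eqP/eqP => [<-|->]; rewrite ?monK ?midxK. Qed.

Lemma sum_mon (f : mono d -> F) : \sum_(i : 'I_n) f (mon i) = \sum_(a : mono d) f a.
Proof.
rewrite (reindex midx); first by apply: eq_bigr => a _; rewrite midxK.
by exists (@mon d) => [a|i] _; rewrite ?midxK ?monK.
Qed.

Definition mact (s : 'S_3) (a : mono d) : mono d := [ffun l => a ((s^-1)%g l)].

Lemma mactM s t a : mact (s * t)%g a = mact t (mact s a).
Proof. by apply/ffunP => l; rewrite !ffunE invMg permM. Qed.

Lemma mact1 a : mact 1%g a = a.
Proof. by apply/ffunP => l; rewrite !ffunE invg1 perm1. Qed.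

Lemma mdeg_mact s a : mdeg (mact s a) = mdeg a.
Proof.
rewrite /mdeg (reindex_inj (@perm_inj _ s)) /=.
by apply: eq_bigr => k _; rewrite ffunE permK.
Qed.

Definition mvec (a : mono d) : 'rV[F]_n := delta_mx 0 (midx a).

Lemma mvec_ext (A B : 'M[F]_n) : (forall a, mvec a *m A = mvec a *m B) -> A = B.
Proof. by move=> AB; apply/row_matrixP => i; rewrite !rowE -(monK i); apply: AB. Qed.

Lemma mvec_Pmx s a : mvec a *m Pmx F d s = mvec (mact s a).
Proof.
rewrite /mvec -rowE; apply/rowP => k; rewrite !mxE eq_mon midxK /=.
by rewrite /mact; congr (_ %:R); apply/eqP/eqP => [->|->].
Qed.

Lemma PmxM s t : Pmx F d s *m Pmx F d t = Pmx F d (s * t)%g.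
Proof. by apply: mvec_ext => a; rewrite mulmxA !mvec_Pmx mactM. Qed.

Definition degproj j : 'M[F]_n := \matrix_(i, k) ((i == k) && (mdeg (mon i) == j))%:R.

Lemma mvec_degproj j a : mvec a *m degproj j = (mdeg a == j)%:R *: mvec a.
Proof.
rewrite /mvec -rowE; apply/rowP => k; rewrite !mxE midxK eqxx eq_sym.
by case: (mdeg a == j); case: (k == midx a); rewrite ?mulr1 ?mulr0 ?mul1r ?mul0r.
Qed.

Lemma degprojMl j (A : 'M[F]_n) i k :
  (degproj j *m A) i k = (mdeg (mon i) == j)%:R * A i k.
Proof.
rewrite !mxE (bigD1 i) //= big1 ?addr0; first by rewrite !mxE eqxx.
by move=> l hl; rewrite !mxE eq_sym (negbTE hl) mul0r.
Qed.

Lemma degprojMr j (A : 'M[F]_n) i k :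
  (A *m degproj j) i k = A i k * (mdeg (mon k) == j)%:R.
Proof.
rewrite !mxE (bigD1 k) //= big1 ?addr0; first by rewrite !mxE eqxx.
by move=> l hl; rewrite !mxE (negbTE hl) mulr0.
Qed.

Lemma Dmx_degproj j : Dmx F d j = 1%:M - degproj j.
Proof.
apply/matrixP => i k; rewrite !mxE.
by case: (i == k); case: (mdeg (mon i) == j); rewrite /= ?subrr ?subr0.
Qed.

Lemma degproj_idem j : degproj j *m degproj j = degproj j.
Proof.
apply: mvec_ext => a; rewrite mulmxA mvec_degproj -scalemxAl mvec_degproj scalerA.
by case: (mdeg a == j); rewrite ?mulr1 ?mulr0.
Qed.

Lemma degproj_Pmx j s : degproj j *m Pmx F d s = Pmx F d s *m degproj j.
Proof.
apply: mvec_ext => a.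
by rewrite !mulmxA mvec_Pmx mvec_degproj -scalemxAl mvec_Pmx mvec_degproj mdeg_mact.
Qed.

Definition Ecoef (a b : mono d) : F :=
  \sum_(k < 3) (if lower_k k a b then ((a k : nat) * (d - a k))%:R else 0).

Lemma EmxE i k : Emx F d i k = Ecoef (mon i) (mon k).
Proof. by rewrite mxE. Qed.

Lemma mvec_Emx a : mvec a *m Emx F d = \row_k Ecoef a (mon k).
Proof. by rewrite /mvec -rowE; apply/rowP => k; rewrite !mxE midxK. Qed.

Lemma lower_k_mact (s : 'S_3) m (a b : mono d) :
  lower_k (s m) (mact s a) b = lower_k m a (mact s^-1 b).
Proof.
rewrite /lower_k !ffunE permK invgK; congr (_ && _).
apply/forallP/forallP => H l; apply/implyP => hl.
  by have := H (s l); rewrite !ffunE permK (inj_eq perm_inj) hl /= invgK.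
have := H (s^-1 l)%g; rewrite !ffunE invgK permKV.
by have -> : (s^-1%g l != m) by apply: contra hl => /eqP <-; rewrite permKV.
Qed.

Lemma Ecoef_mact s a b : Ecoef (mact s a) b = Ecoef a (mact s^-1 b).
Proof.
rewrite /Ecoef (reindex_inj (@perm_inj _ s)) /=.
by apply: eq_bigr => m _; rewrite lower_k_mact ffunE permK.
Qed.

Lemma Emx_Pmx s : Emx F d *m Pmx F d s = Pmx F d s *m Emx F d.
Proof.
apply: mvec_ext => a; rewrite !mulmxA mvec_Pmx !mvec_Emx; apply/rowP => k.
rewrite !mxE (bigD1 (midx (mact s^-1 (mon k)))) //= big1 ?addr0.
  rewrite !mxE midxK Ecoef_mact.
  suff -> : (mon k == [ffun l => mact s^-1 (mon k) ((s^-1)%g l)]) by rewrite mulr1.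
  by apply/eqP/ffunP => l; rewrite !ffunE invgK permKV.
move=> l hl; rewrite !mxE.
suff -> : (mon k == [ffun l0 => mon l ((s^-1)%g l0)]) = false by rewrite mulr0.
apply: contraNF hl => /eqP hk; rewrite -eq_mon hk; apply/eqP/ffunP => m.
by rewrite !ffunE invgK permK.
Qed.

Lemma lower_k_mdeg k (a b : mono d) : lower_k k a b -> mdeg a = (mdeg b).+1.
Proof.
case/andP => /eqP hk /forallP H.
rewrite /mdeg (bigD1 k) //= [in RHS](bigD1 k) //= hk addSn; congr (_ + _).+1.
by apply: eq_bigr => l hl; have := H l; rewrite hl => /eqP ->.
Qed.

Lemma Ecoef_neq0_mdeg (a b : mono d) : Ecoef a b != 0 -> mdeg a = (mdeg b).+1.
Proof.
move=> H; case: (boolP [exists k, lower_k k a b]); first by case/existsP => k /lower_k_mdeg.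
move/existsPn => H'; case/eqP: H; apply: big1 => k _.
by rewrite (negbTE (H' k)).
Qed.

Lemma degproj_Emx j : degproj j.+1 *m Emx F d = degproj j.+1 *m Emx F d *m degproj j.
Proof.
apply/matrixP => i k; rewrite degprojMr !degprojMl EmxE.
have [->|/Ecoef_neq0_mdeg->] := eqVneq (Ecoef (mon i) (mon k)) 0.
  by rewrite !(mulr0, mul0r).
by rewrite eqSS; case: (mdeg (mon k) == j); rewrite ?mulr1 ?mulr0 ?mul0r.
Qed.

Lemma degproj0_Emx : degproj 0 *m Emx F d = 0.
Proof.
apply/matrixP => i k; rewrite degprojMl EmxE mxE.
have [->|/Ecoef_neq0_mdeg->] := eqVneq (Ecoef (mon i) (mon k)) 0; first by rewrite mulr0.
by rewrite mul0r.
Qed.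

(* x^b |-> x_1 x^b; the exponent is left unchanged when it would reach d. *)
Definition raise0 (b : mono d) : mono d :=
  [ffun k => if k == ord0 then insubd (b k) (b k).+1 else b k].

Lemma raise0_0 (b : mono d) : ((b ord0).+1 < d)%N -> (raise0 b ord0 : nat) = (b ord0).+1.
Proof. by move=> h; rewrite ffunE eqxx val_insubd h. Qed.

Lemma raise0_neq0 (b : mono d) k : k != ord0 -> raise0 b k = b k.
Proof. by move=> h; rewrite ffunE (negbTE h). Qed.

Lemma lower_raise0 (b : mono d) : ((b ord0).+1 < d)%N -> lower_k ord0 (raise0 b) b.
Proof.
move=> h; rewrite /lower_k raise0_0 // eqxx /=; apply/forallP => l.
by apply/implyP => hl; rewrite raise0_neq0.
Qed.

Lemma Ecoef_raise0 (b : mono d) : ((b ord0).+1 < d)%N ->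
  Ecoef (raise0 b) b = ((b ord0).+1 * (d - (b ord0).+1))%:R.
Proof.
move=> h; rewrite /Ecoef (bigD1 ord0) //= lower_raise0 // big1 ?addr0 ?raise0_0 //.
move=> k hk; case: ifP => // /andP[_ /forallP H].
have := H ord0; rewrite eq_sym hk /= -(inj_eq val_inj) /= raise0_0 //.
by move=> /eqP /esym /n_Sn.
Qed.

Lemma Ecoef_raise0_other (b x : mono d) : ((b ord0).+1 < d)%N ->
  Ecoef (raise0 b) x != 0 -> x != b -> (x ord0 : nat) = (b ord0).+1.
Proof.
move=> h; case: (boolP [exists k, lower_k k (raise0 b) x]); last first.
  by move/existsPn => H' /eqP[]; apply: big1 => k _; rewrite (negbTE (H' k)).
case/existsP => k /andP[/eqP hk /forallP H] _ hx.
have [ek|nk] := eqVneq k ord0.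
  case/eqP: hx; apply/ffunP => l; have [->|nl] := eqVneq l ord0.
    by apply/val_inj; move: hk; rewrite ek raise0_0 // => -[].
  by have := H l; rewrite ek nl /= raise0_neq0 // => /eqP.
by have := H ord0; rewrite eq_sym nk /= => /eqP <-; rewrite raise0_0.
Qed.

Lemma mono0_le_mdeg (x : mono d) : (x ord0 <= mdeg x)%N.
Proof. by rewrite /mdeg (bigD1 ord0) //= leq_addr. Qed.

Hypothesis charF0 : [pchar F] =i pred0.

Lemma natf_eq0 m : ((m%:R : F) == 0) = (m == 0)%N.
Proof. by have /pcharf0P := charF0; apply. Qed.

Lemma natf_inj m k : (m%:R : F) = k%:R -> m = k.
Proof.
wlog le_mk : m k / (m <= k)%N => [H|].
  by case: (leqP m k) => h; [exact: H | move/esym/H => ->; rewrite // ltnW].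
move=> /eqP; rewrite eq_sym -subr_eq0 -natrB // natf_eq0 subn_eq0 => h.
by apply/eqP; rewrite eqn_leq le_mk h.
Qed.

(* If every degree-j monomial with a larger x_1-exponent than b lies in U,
   so does x^b: E(x_1 x^b) is a nonzero multiple of x^b plus such monomials. *)
Lemma mvec_sub_Emx_image j (U : 'M[F]_n) (b : mono d) : (j.+2 <= d)%N -> mdeg b = j ->
  (degproj j.+1 *m Emx F d <= U)%MS ->
  (forall x, mdeg x = j -> (x ord0 : nat) = (b ord0).+1 -> (mvec x <= U)%MS) ->
  (mvec b <= U)%MS.
Proof.
move=> hd hb hU IH.
have hb0 : ((b ord0).+1 < d)%N by have := mono0_le_mdeg b; rewrite hb; lia.
have deg_raise : mdeg (raise0 b) = j.+1 by rewrite (lower_k_mdeg (lower_raise0 hb0)) hb.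
set v := mvec (raise0 b) *m Emx F d.
have hv : (v <= U)%MS.
  apply: submx_trans hU.
  have -> : v = mvec (raise0 b) *m (degproj j.+1 *m Emx F d).
    by rewrite mulmxA mvec_degproj deg_raise eqxx scale1r.
  exact: submxMl.
have hc : Ecoef (raise0 b) b != 0.
  by rewrite Ecoef_raise0 // natf_eq0 muln_eq0 negb_or /=; lia.
have -> : mvec b = (Ecoef (raise0 b) b)^-1 *:
                   (v - \sum_(k | k != midx b) v 0 k *: delta_mx 0 k).
  rewrite {1}[v]row_sum_delta (bigD1 (midx b)) //= addrK /v mvec_Emx mxE midxK.
  by rewrite scalerA mulVf // scale1r.
apply: scalemx_sub; apply: addmx_sub => //; rewrite eqmx_opp.
apply: summx_sub => k hk.
have [->|nz] := eqVneq (v 0 k) 0; first by rewrite scale0r sub0mx.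
apply: scalemx_sub; rewrite -(monK k) -/(mvec _).
move: nz; rewrite /v mvec_Emx mxE => nz.
have hx : mon k != b by rewrite eq_mon.
apply: IH; last exact: Ecoef_raise0_other nz hx.
by have := Ecoef_neq0_mdeg nz; rewrite deg_raise => -[].
Qed.

Lemma degproj_sub_Emx_image j : (j.+2 <= d)%N -> (degproj j <= degproj j.+1 *m Emx F d)%MS.
Proof.
move=> hd; set U := degproj j.+1 *m Emx F d.
have all_deg_j m b : mdeg b = j -> (j - b ord0 <= m)%N -> (mvec b <= U)%MS.
  elim: m b => [|m IH] b hb hm; apply: (mvec_sub_Emx_image hd hb (submx_refl U)).
    by move=> x hx hx0; have := mono0_le_mdeg x; rewrite hx hx0; lia.
  by move=> x hx hx0; apply: IH hx _; lia.
apply/row_subP => i; rewrite rowE -(monK i) -/(mvec _) mvec_degproj.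
case: eqP => h; last by rewrite scale0r sub0mx.
by apply: scalemx_sub; apply: (all_deg_j j) => //; rewrite leq_subr.
Qed.

Definition mono3 (x y z : 'I_d) : mono d :=
  [ffun l => if l == i0 then x else if l == i1 then y else z].

Lemma mono3_0 x y z : mono3 x y z i0 = x. Proof. by rewrite ffunE. Qed.
Lemma mono3_1 x y z : mono3 x y z i1 = y. Proof. by rewrite ffunE. Qed.
Lemma mono3_2 x y z : mono3 x y z i2 = z. Proof. by rewrite ffunE. Qed.

Lemma ord3P (l : 'I_3) : [\/ l = i0, l = i1 | l = i2].
Proof.
case: l => [[|[|[|m]]] hl] //.
- by apply: Or31; apply: val_inj.
- by apply: Or32; apply: val_inj.
- by apply: Or33; apply: val_inj.
Qed.

Lemma eq_mono3 (f g : mono d) : (f == g) = [&& f i0 == g i0, f i1 == g i1 & f i2 == g i2].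
Proof.
apply/eqP/and3P => [->|[/eqP h0 /eqP h1 /eqP h2]]; first by rewrite !eqxx.
by apply/ffunP => l; case: (ord3P l) => ->.
Qed.

Lemma mono3K (a : mono d) : mono3 (a i0) (a i1) (a i2) = a.
Proof. by apply/eqP; rewrite eq_mono3 mono3_0 mono3_1 mono3_2 !eqxx. Qed.

Lemma sum_mono3 (f : mono d -> F) :
  \sum_(a : mono d) f a = \sum_(x < d) \sum_(y < d) \sum_(z < d) f (mono3 x y z).
Proof.
transitivity (\sum_(q : 'I_d * ('I_d * 'I_d)) f (mono3 q.1 q.2.1 q.2.2)).
  rewrite (reindex (fun q : 'I_d * ('I_d * 'I_d) => mono3 q.1 q.2.1 q.2.2)) //.
  exists (fun a : mono d => (a i0, (a i1, a i2))) => [[x [y z]]|a] _ /=.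
    by rewrite mono3_0 mono3_1 mono3_2.
  by rewrite mono3K.
rewrite -(pair_bigA _ (fun x (p : 'I_d * 'I_d) => f (mono3 x p.1 p.2))) /=.
by apply: eq_bigr => x _; rewrite -(pair_bigA _ (fun y z => f (mono3 x y z))).
Qed.

Lemma mdeg_mono3 x y z : mdeg (mono3 x y z) = (x + y + z)%N.
Proof.
rewrite /mdeg !big_ord_recr big_ord0 /= add0n.
have -> : (@ord_max 2) = i2 by apply: val_inj.
have -> : widen_ord (leqnSn 2) (@ord_max 1) = i1 by apply: val_inj.
have -> : widen_ord (leqnSn 2) (widen_ord (leqnSn 1) (@ord_max 0)) = i0 by apply: val_inj.
by rewrite mono3_0 mono3_1 mono3_2.
Qed.

Local Ltac fixed_mono3 :=
  rewrite eq_mono3 /mact !ffunE; unfold t01, t02, t12, cyc1, cyc2;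
  rewrite ?invMg !tpermV ?permM !tpermE /= ?ffunE /=;
  repeat (rewrite ?eqxx /=; match goal with
    |- context[?a == ?b] => case: (eqVneq a b) => [?|?]; try subst end);
  try done; try (match goal with H : is_true (?a != ?a) |- _ => by rewrite eqxx in H end).

Lemma mono3_fix_t01 x y z : (mono3 x y z == mact t01 (mono3 x y z)) = (x == y).
Proof. by fixed_mono3. Qed.
Lemma mono3_fix_t02 x y z : (mono3 x y z == mact t02 (mono3 x y z)) = (x == z).
Proof. by fixed_mono3. Qed.
Lemma mono3_fix_t12 x y z : (mono3 x y z == mact t12 (mono3 x y z)) = (y == z).
Proof. by fixed_mono3. Qed.
Lemma mono3_fix_cyc1 x y z :
  (mono3 x y z == mact cyc1 (mono3 x y z)) = (x == y) && (y == z).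
Proof. by fixed_mono3. Qed.
Lemma mono3_fix_cyc2 x y z :
  (mono3 x y z == mact cyc2 (mono3 x y z)) = (x == y) && (y == z).
Proof. by fixed_mono3. Qed.

Section Isotypic.
Variable chi : 'S_3 -> F.
Hypothesis chiM : forall s t, chi (s * t)%g = chi s * chi t.
Hypothesis chi_sqr : forall s, chi s * chi s = 1.

Lemma chi1 : chi 1%g = 1.
Proof. by have := chi_sqr 1%g; rewrite -chiM mulg1. Qed.

Lemma chiV s : chi (s^-1)%g = chi s.
Proof. by rewrite -[LHS]mulr1 -(chi_sqr s) mulrA -chiM mulVg chi1 mul1r. Qed.

Definition symmetrizer : 'M[F]_n := \sum_(s : 'S_3) chi s *: Pmx F d s.

Lemma symmetrizer_Pmx t : symmetrizer *m Pmx F d t = chi t *: symmetrizer.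
Proof.
rewrite /symmetrizer mulmx_suml scaler_sumr.
under eq_bigr do rewrite -scalemxAl PmxM.
rewrite (reindex_inj (mulIg t^-1)%g) /=.
by apply: eq_bigr => s _; rewrite mulgVK chiM chiV scalerA mulrC.
Qed.

Lemma degproj_symmetrizer j : degproj j *m symmetrizer = symmetrizer *m degproj j.
Proof.
rewrite /symmetrizer mulmx_suml mulmx_sumr; apply: eq_bigr => s _.
by rewrite -scalemxAl -scalemxAr degproj_Pmx.
Qed.

Lemma Emx_symmetrizer : Emx F d *m symmetrizer = symmetrizer *m Emx F d.
Proof.
rewrite /symmetrizer mulmx_suml mulmx_sumr; apply: eq_bigr => s _.
by rewrite -scalemxAl -scalemxAr Emx_Pmx.
Qed.

Lemma eigen_symmetrizer m (Y : 'M[F]_(m, n)) :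
  (forall s, Y *m Pmx F d s = chi s *: Y) -> Y *m symmetrizer = 6%:R *: Y.
Proof.
move=> YP; rewrite /symmetrizer mulmx_sumr.
under eq_bigr do rewrite -scalemxAr YP scalerA chi_sqr scale1r.
by rewrite sumr_const card_Sn -scaler_nat.
Qed.

Definition isoproj j : 'M[F]_n := 6%:R^-1 *: (degproj j *m symmetrizer).

Lemma six_neq0 : (6%:R : F) != 0. Proof. by rewrite natf_eq0. Qed.

Lemma isoproj_idem j : isoproj j *m isoproj j = isoproj j.
Proof.
rewrite /isoproj -scalemxAl -scalemxAr scalerA mulmxA -(mulmxA (degproj j)).
rewrite -degproj_symmetrizer mulmxA degproj_idem -mulmxA.
rewrite (eigen_symmetrizer symmetrizer_Pmx) -scalemxAr scalerA -mulrA mulVf ?mulr1 //.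
exact: six_neq0.
Qed.

Lemma isoproj_Pmx j s : isoproj j *m Pmx F d s = chi s *: isoproj j.
Proof. by rewrite /isoproj -scalemxAl -mulmxA symmetrizer_Pmx -scalemxAr !scalerA mulrC. Qed.

Lemma isoproj_Dmx j : isoproj j *m Dmx F d j = 0.
Proof.
rewrite /isoproj Dmx_degproj -scalemxAl mulmxBr mulmx1 -mulmxA.
by rewrite -degproj_symmetrizer mulmxA degproj_idem subrr scaler0.
Qed.

Definition chi_eigenspace : 'M[F]_n :=
  (\bigcap_(s : 'S_3) kermx (Pmx F d s - (chi s)%:M))%MS.

Lemma sub_isoproj m (Y : 'M[F]_(m, n)) j :
  (Y <= isoproj j)%MS = (Y <= kermx (Dmx F d j))%MS && (Y <= chi_eigenspace)%MS.
Proof.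
apply/idP/andP => [hY|[hD hchi]].
  split; apply: submx_trans hY _; first by apply/sub_kermxP; rewrite isoproj_Dmx.
  apply/sub_bigcapmxP => s _; apply/sub_kermxP.
  by rewrite mulmxBr isoproj_Pmx mul_mx_scalar subrr.
have YP s : Y *m Pmx F d s = chi s *: Y.
  have /sub_kermxP := submx_trans hchi (bigcapmx_inf s (erefl true) (submx_refl _)).
  by rewrite mulmxBr mul_mx_scalar => /eqP; rewrite subr_eq0 => /eqP.
have Ydeg : Y *m degproj j = Y.
  move/sub_kermxP: hD; rewrite Dmx_degproj mulmxBr mulmx1.
  by move=> /eqP; rewrite subr_eq0 => /eqP <-.
have -> : Y = Y *m isoproj j.
  rewrite /isoproj -scalemxAr mulmxA Ydeg eigen_symmetrizer // scalerA mulVf ?scale1r //.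
  exact: six_neq0.
exact: submxMl.
Qed.

Lemma isotypicE j : (@isotypic F d j chi :=: isoproj j :&: kermx (Emx F d))%MS.
Proof.
apply/eqmxP/andP; split.
  rewrite sub_capmx sub_isoproj; apply/andP; split; last first.
    exact: submx_trans (capmxSl _ _) (capmxSr _ _).
  apply/andP; split; last exact: capmxSr.
  exact: submx_trans (capmxSl _ _) (capmxSl _ _).
have := submx_refl (isoproj j :&: kermx (Emx F d))%MS.
rewrite {1}sub_capmx sub_isoproj => /andP[/andP[hD hchi] hE].
by rewrite /isotypic !sub_capmx hD hE hchi.
Qed.

Lemma rank_isoproj_isotypic j :
  (\rank (isoproj j *m Emx F d) + \rank (@isotypic F d j chi) = \rank (isoproj j))%N.
Proof. by rewrite isotypicE mxrank_mul_ker. Qed.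

Lemma rank_isoproj_Emx j : (j.+2 <= d)%N -> \rank (isoproj j.+1 *m Emx F d) = \rank (isoproj j).
Proof.
move=> hd; apply/eqP; rewrite eqn_leq; apply/andP; split; apply: mxrankS.
  have -> : isoproj j.+1 *m Emx F d = (degproj j.+1 *m Emx F d) *m isoproj j.
    rewrite /isoproj -scalemxAl -scalemxAr -mulmxA -Emx_symmetrizer mulmxA degproj_Emx.
    by rewrite (mulmxA _ (degproj j)) -(mulmxA _ (degproj j) (degproj j)) degproj_idem.
  exact: submxMl.
have [X hX] := submxP (degproj_sub_Emx_image hd).
have -> : isoproj j = X *m (isoproj j.+1 *m Emx F d).
  by rewrite /isoproj -!scalemxAl -!scalemxAr hX -!mulmxA Emx_symmetrizer.
exact: submxMl.
Qed.

Lemma isoproj0_Emx : isoproj 0 *m Emx F d = 0.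
Proof.
by rewrite /isoproj -scalemxAl -mulmxA -Emx_symmetrizer mulmxA degproj0_Emx mul0mx scaler0.
Qed.

(* Character formula: the trace counts the monomials fixed by each s. *)
Lemma mxtrace_degproj_symmetrizer j : \tr (degproj j *m symmetrizer) =
  \sum_(x < d) \sum_(y < d) \sum_(z < d) (((x : nat) + y + z == j)%:R *
     (1 + chi t01 * (x == y)%:R + chi t02 * (x == z)%:R + chi t12 * (y == z)%:R
        + chi cyc1 * ((x == y) && (y == z))%:R + chi cyc2 * ((x == y) && (y == z))%:R)).
Proof.
transitivity (\sum_(a : mono d) (mdeg a == j)%:R *
                 \sum_(s : 'S_3) chi s * (a == mact s a)%:R).
  rewrite /mxtrace -sum_mon; apply: eq_bigr => i _.
  rewrite degprojMl /symmetrizer summxE; congr (_ * _); apply: eq_bigr => s _.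
  by rewrite !mxE.
rewrite sum_mono3; apply: eq_bigr => x _; apply: eq_bigr => y _; apply: eq_bigr => z _.
rewrite mdeg_mono3 sum_S3 mono3_fix_t01 mono3_fix_t02 mono3_fix_t12.
by rewrite mono3_fix_cyc1 mono3_fix_cyc2 mact1 eqxx chi1 mulr1.
Qed.

Lemma rank_isoproj (eps : F) j : (j < d)%N ->
  chi t01 = eps -> chi t02 = eps -> chi t12 = eps ->
  (6 * \rank (isoproj j))%N%:R =
  (\sum_(x < d) \sum_(y < d) \sum_(z < d) ((x : nat) + y + z == j)
     + 2 * (j %% 3 == 0))%N%:R + eps * (3 * (j %/ 2).+1)%N%:R.
Proof.
move=> hj h01 h02 h12.
have hcyc1 : chi cyc1 = 1 by rewrite chiM h01 -h12 chi_sqr.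
have hcyc2 : chi cyc2 = 1 by rewrite chiM h12 -h01 chi_sqr.
rewrite natrM -mxtrace_idempotent ?isoproj_idem // mxtraceZ mulrA divff ?six_neq0 // mul1r.
rewrite mxtrace_degproj_symmetrizer h01 h02 h12 hcyc1 hcyc2.
rewrite (eq_bigr (fun x : 'I_d => \sum_(y < d) \sum_(z < d)
   ((((x : nat) + y + z == j) + 2 * [&& (x : nat) + y + z == j, x == y & y == z])%N%:R
    + eps * ((((x : nat) + y + z == j) && (x == y)) + (((x : nat) + y + z == j) && (x == z))
             + (((x : nat) + y + z == j) && (y == z)))%N%:R))); last first.
  move=> x _; apply: eq_bigr => y _; apply: eq_bigr => z _.
  by case: ((x : nat) + y + z == j); case: (x == y); case: (x == z); case: (y == z) => /=; ring.
rewrite sum3_natr; congr (_%:R + eps * _%:R); first by rewrite sum3D sum3Ml count_triples_diag.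
by rewrite !sum3D count_triples_eq01 // count_triples_eq02 // count_triples_eq12 //; lia.
Qed.

Lemma rank_isotypic j : (j < d)%N ->
  (\rank (@isotypic F d j chi) + (if j is j'.+1 then \rank (isoproj j') else 0)
   = \rank (isoproj j))%N.
Proof.
case: j => [_|j hj].
  by rewrite -(rank_isoproj_isotypic 0) isoproj0_Emx mxrank0 addn0.
by rewrite -(rank_isoproj_isotypic j.+1) (rank_isoproj_Emx hj) addnC.
Qed.

End Isotypic.

Definition triv_char (s : 'S_3) : F := 1.
Definition sign_char (s : 'S_3) : F := (-1) ^+ odd_perm s.

Lemma triv_charM s t : triv_char (s * t)%g = triv_char s * triv_char t.
Proof. by rewrite /triv_char mulr1. Qed.

Lemma triv_char_sqr s : triv_char s * triv_char s = 1.
Proof. by rewrite /triv_char mulr1. Qed.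

Lemma sign_charM s t : sign_char (s * t)%g = sign_char s * sign_char t.
Proof. by rewrite /sign_char odd_permM signr_addb. Qed.

Lemma sign_char_sqr s : sign_char s * sign_char s = 1.
Proof. by rewrite -signr_addb addbb. Qed.

Lemma sign_char_tperm (x y : 'I_3) : x != y -> sign_char (tperm x y) = -1.
Proof. by move=> xy; rewrite /sign_char odd_tperm xy expr1. Qed.

Lemma triv_rank j : (j < d)%N ->
  (triv F d j + (if j is j'.+1 then \rank (isoproj triv_char j') else 0)
   = \rank (isoproj triv_char j))%N.
Proof. exact: (rank_isotypic triv_charM triv_char_sqr). Qed.

Lemma sign_rank j : (j < d)%N ->
  (sign F d j + (if j is j'.+1 then \rank (isoproj sign_char j') else 0)
   = \rank (isoproj sign_char j))%N.
Proof. exact: (rank_isotypic sign_charM sign_char_sqr). Qed.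

Lemma rank_isoproj_triv j : (j < d)%N ->
  (12 * \rank (isoproj triv_char j)
   = j.+1 * j.+2 + 4 * (j %% 3 == 0) + 6 * (j %/ 2).+1)%N.
Proof.
move=> hj; have := count_triples hj.
have /natf_inj : (6 * \rank (isoproj triv_char j))%N%:R =
    (\sum_(x < d) \sum_(y < d) \sum_(z < d) ((x : nat) + y + z == j)
       + 2 * (j %% 3 == 0) + 3 * (j %/ 2).+1)%N%:R :> F.
  by rewrite (rank_isoproj triv_charM triv_char_sqr (eps := 1) hj) // mul1r -natrD.
lia.
Qed.

Lemma rank_isoproj_sign j : (j < d)%N ->
  (12 * \rank (isoproj sign_char j) + 6 * (j %/ 2).+1
   = j.+1 * j.+2 + 4 * (j %% 3 == 0))%N.
Proof.
move=> hj; have := count_triples hj.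
have /natf_inj : (6 * \rank (isoproj sign_char j) + 3 * (j %/ 2).+1)%N%:R =
    (\sum_(x < d) \sum_(y < d) \sum_(z < d) ((x : nat) + y + z == j)
       + 2 * (j %% 3 == 0))%N%:R :> F.
  rewrite natrD (rank_isoproj sign_charM sign_char_sqr (eps := -1) hj) ?sign_char_tperm //.
  by rewrite mulN1r addrNK.
lia.
Qed.

End Monomials.

Theorem theorem5p3 (F : closedFieldType) (charF0 : [pchar F] =i pred0)
    (d j : nat) (hd : (3 <= d)%N) (hj : (j <= d - 1)%N) :
  [/\ (odd d && ~~ odd (d - j) ->
         (triv F d j)%:Z = ((3 * d - 2 * j - 3) %/ 6)%N%:Z - ((Posz (d - j) - 2) %/ 2)%Z
      /\ (sign F d j)%:Z = ((3 * d - 2 * j - 3) %/ 6)%N%:Z - ((Posz (d - j) - 2) %/ 2)%Z),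
      (odd d && odd (d - j) ->
         (triv F d j)%:Z = ((3 * d - 2 * j - 3) %/ 6)%N%:Z - ((Posz (d - j) - 3) %/ 2)%Z
      /\ (sign F d j)%:Z = ((3 * d - 2 * j - 3) %/ 6)%N%:Z - ((Posz (d - j) - 1) %/ 2)%Z),
      (~~ odd d && ~~ odd (d - j) ->
         (triv F d j)%:Z = ((3 * d - 2 * j) %/ 6)%N%:Z - ((Posz (d - j) - 2) %/ 2)%Z
      /\ (sign F d j)%:Z = ((3 * d - 2 * j) %/ 6)%N%:Z - ((Posz (d - j)) %/ 2)%Z) &
      (~~ odd d && odd (d - j) ->
         (triv F d j)%:Z = ((3 * d - 2 * j) %/ 6)%N%:Z - ((Posz (d - j) - 1) %/ 2)%Z
      /\ (sign F d j)%:Z = ((3 * d - 2 * j) %/ 6)%N%:Z - ((Posz (d - j) - 1) %/ 2)%Z)].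
Proof.
have hjd : (j < d)%N by lia.
have eT := triv_rank charF0 hjd; have eS := sign_rank charF0 hjd.
have rT k := @rank_isoproj_triv F d charF0 k; have rS k := @rank_isoproj_sign F d charF0 k.
case: j hj hjd eT eS => [|j] hj hjd /= eT eS.
  by move: (rT _ hjd) (rS _ hjd); split=> /andP[]; lia.
move: (rT _ hjd) (rS _ hjd) (rT _ (ltnW hjd)) (rS _ (ltnW hjd)).
by split=> /andP[]; lia.
Qed.
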